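(* Let $m\ge1$, $n\ge1$, $N>2n$, let $\Sigma_0,\dots,\Sigma_n\in\mathbb R^{m\times m}$ and let $\mathbf T_n$ be the block-Toeplitz matrix whose $(i,j)$ block ($i,j=0,\dots,n$) is $\Sigma_{i-j}$ if $i\ge j$ and $\Sigma_{j-i}^\top$ if $i<j$. Assume there exists a symmetric positive definite $mN\times mN$ matrix $\bar{\boldsymbol\Sigma}_N$ with $E_n^\top\bar{\boldsymbol\Sigma}_NE_n=\mathbf T_n$ and $\mathbf U_N^\top\bar{\boldsymbol\Sigma}_N\mathbf U_N=\bar{\boldsymbol\Sigma}_N$. Let $(\Lambda_k,\Theta_k)$, $k\ge1$, be a sequence in $\mathcal L_+$ with $\|(\Lambda_k,\Theta_k)\|\to\infty$. Then $\|A(\Lambda_k,\Theta_k)\|\to\infty$, and consequently $J(\Lambda_k,\Theta_k)\to\infty$, where $J(\Lambda,\Theta)=\operatorname{Tr}(\Lambda\mathbf T_n)-\log\det A(\Lambda,\Theta)$.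
   Context: $\mathfrak S_k$ denotes the space of real symmetric $mk\times mk$ matrices. $E_n$ is the $mN\times m(n+1)$ matrix with $N\times(n+1)$ blocks of size $m\times m$ whose $(i,i)$ blocks ($i=1,\dots,n+1$) are $I_m$ and other blocks $0$. $\mathbf U_N$ is the $mN\times mN$ block shift matrix whose $(i,i+1)$ blocks ($i=1,\dots,N-1$) and $(N,1)$ block are $I_m$, others $0$. The linear map $A:\mathfrak S_{n+1}\times\mathfrak S_N\to\mathfrak S_N$ is $A(\Lambda,\Theta)=E_n\Lambda E_n^\top+\mathbf U_N\Theta\mathbf U_N^\top-\Theta$, and $\mathcal L_+=\{(\Lambda,\Theta)\in(\ker A)^\perp:A(\Lambda,\Theta)>0\}$, orthogonality and norms being with respect to the Frobenius-type inner product $\langle(\Lambda_1,\Theta_1),(\Lambda_2,\Theta_2)\rangle=\operatorname{Tr}(\Lambda_1\Lambda_2)+\operatorname{Tr}(\Theta_1\Theta_2)$ (any norms may be used since all spaces are finite-dimensional). *)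

From HB Require Import structures.
From mathcomp Require Import all_boot all_order all_algebra.
From mathcomp Require Import all_classical all_reals all_analysis.
Import Order.TTheory GRing.Theory Num.Theory.
Local Open Scope ring_scope.

(* Block conventions: an index k : 'I_(m * K) of a block matrix with m x m
   blocks lies in block row k %/ m (0-based) at offset k %% m inside the block. *)

Section Defs.
Variable R : realType.

(* entry (a,b) of an m x m matrix, read with nat indices (0 if out of range) *)
Definition mxentry (m : nat) (M : 'M[R]_m) (a b : nat) : R :=
  \sum_(i < m) \sum_(j < m) ((i == a :> nat) && (j == b :> nat))%:R * M i j.

Definition Emx (m N n : nat) : 'M[R]_(m * N, m * n.+1) :=
  \matrix_(k, l) ((k : nat) == (l : nat))%:R.

(* U_N : mN x mN block shift, (i,i+1) blocks and (N,1) block equal I_m *)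
Definition Umx (m N : nat) : 'M[R]_(m * N) :=
  \matrix_(k, l) (((l %/ m)%N == ((k %/ m).+1 %% N)%N)
                  && ((k %% m)%N == (l %% m)%N))%:R.

Definition Toep (m n : nat) (Sig : nat -> 'M[R]_m) : 'M[R]_(m * n.+1) :=
  \matrix_(k, l)
    if (l %/ m <= k %/ m)%N
    then mxentry m (Sig (k %/ m - l %/ m)%N) (k %% m) (l %% m)
    else mxentry m (Sig (l %/ m - k %/ m)%N) (l %% m) (k %% m).

Definition symmx (p : nat) (M : 'M[R]_p) : Prop := M^T = M.

Definition posdef (p : nat) (M : 'M[R]_p) : Prop :=
  symmx p M /\ forall x : 'cV[R]_p, x != 0 -> 0 < (x^T *m M *m x) 0 0.

Definition Aop (m N n : nat) (L : 'M[R]_(m * n.+1)) (T : 'M[R]_(m * N)) :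
  'M[R]_(m * N) :=
  Emx m N n *m L *m (Emx m N n)^T + Umx m N *m T *m (Umx m N)^T - T.

Definition pinner (m N n : nat) (L1 : 'M[R]_(m * n.+1)) (T1 : 'M[R]_(m * N))
  L2 T2 : R := \tr (L1 *m L2) + \tr (T1 *m T2).

Definition in_kerA_perp (m N n : nat) (L : 'M[R]_(m * n.+1)) (T : 'M[R]_(m * N))
  : Prop :=
  symmx _ L /\ symmx _ T /\
  forall (L' : 'M[R]_(m * n.+1)) (T' : 'M[R]_(m * N)),
    symmx _ L' -> symmx _ T' -> Aop m N n L' T' = 0 -> pinner m N n L T L' T' = 0.

Definition Lplus (m N n : nat) (L : 'M[R]_(m * n.+1)) (T : 'M[R]_(m * N)) : Prop :=
  in_kerA_perp m N n L T /\ posdef _ (Aop m N n L T).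

Definition frob (p : nat) (M : 'M[R]_p) : R := Num.sqrt (\tr (M *m M^T)).
Definition pnorm (p q : nat) (L : 'M[R]_p) (T : 'M[R]_q) : R :=
  Num.sqrt (\tr (L *m L^T) + \tr (T *m T^T)).

Definition Jfun (m N n : nat) (Sig : nat -> 'M[R]_m)
  (L : 'M[R]_(m * n.+1)) (T : 'M[R]_(m * N)) : R :=
  \tr (L *m Toep m n Sig) - ln (\det (Aop m N n L T)).

End Defs.

From HB Require Import structures.
From mathcomp Require Import all_boot all_order all_algebra.
From mathcomp Require Import all_classical all_reals all_analysis.
From mathcomp Require Import ring lra perm.
Import Order.TTheory GRing.Theory Num.Theory.
Local Open Scope classical_set_scope.
Local Open Scope ring_scope.

Set Implicit Arguments.
Unset Strict Implicit.
Unset Printing Implicit Defensive.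

(* On (ker A)^perp the linear map A is injective, hence bounded below:
   ||(L, T)|| <= K ||A(L, T)||, which gives the first claim.  For the second,
   write tr(L T_n) = tr(A(L, T) Sigma_N) using the two constraints on Sigma_N.
   Since Sigma_N is positive definite, tr(X Sigma_N) >= c tr X for positive
   semidefinite X; and since A(L, T) is positive definite, its entries are
   bounded by t = tr A(L, T), so det A(L, T) <= p! t^p with p = mN.  Hence
   J >= c t - p ln t - ln p!, and t -> oo because ||A(L, T)|| <= p t. *)

Lemma mxtrace_mul_trmx (R : ringType) a b (A B : 'M[R]_(a, b)) :
  \tr (A *m B^T) = \sum_i \sum_j A i j * B i j.
Proof. by apply: eq_bigr => i _; rewrite mxE; apply: eq_bigr => j _; rewrite mxE. Qed.

Section PsdMatrix.
Variable R : realFieldType.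

Definition qform p (A : 'M[R]_p) (x : 'cV[R]_p) : R := (x^T *m A *m x) 0 0.

Definition psdmx p (A : 'M[R]_p) := A^T = A /\ forall x, 0 <= qform A x.

Lemma mulmx_trmx_eq0 a b (A : 'M[R]_(a, b)) : A *m A^T = 0 -> A = 0.
Proof.
move=> AAt0; apply/matrixP => i j; rewrite mxE.
have : \sum_k A i k ^+ 2 = 0.
  have : (A *m A^T) i i = 0 by rewrite AAt0 mxE.
  by rewrite mxE => AAii; rewrite -[RHS]AAii; apply: eq_bigr => k _; rewrite mxE expr2.
by move/psumr_eq0P => /(_ (fun k _ => sqr_ge0 _) j isT) /eqP; rewrite sqrf_eq0 => /eqP.
Qed.

Lemma trmx_delta_mul_delta p (A : 'M[R]_p) i j :
  (delta_mx i 0 : 'cV_p)^T *m A *m delta_mx j 0 = (A i j)%:M.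
Proof. by rewrite [LHS]mx11_scalar trmx_delta -rowE -colE !mxE. Qed.

Lemma qform_delta p (A : 'M[R]_p) i : qform A (delta_mx i 0) = A i i.
Proof. by rewrite /qform trmx_delta_mul_delta mxE. Qed.

Lemma qform_delta_add p (A : 'M[R]_p) i j (s : R) :
  qform A (delta_mx i 0 + s *: delta_mx j 0) =
  A i i + s * A i j + s * A j i + s ^+ 2 * A j j.
Proof.
rewrite /qform !mulmxDr -!scalemxAr [(_ + _)^T]linearD /= [(_ *: _)^T]linearZ /=.
by rewrite !mulmxDl -!scalemxAl !trmx_delta_mul_delta !mxE /= !mulr1n; ring.
Qed.

Lemma psdmx_trace_ge0 p (A : 'M[R]_p) : psdmx A -> 0 <= \tr A.
Proof. by move=> [_ Apsd]; apply: sumr_ge0 => i _; rewrite -qform_delta. Qed.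

(* Testing the quadratic form on [e_i + e_j] and [e_i - e_j] bounds [2 |A i j|]
   by [A i i + A j j]. *)
Lemma psdmx_entry_le_trace p (A : 'M[R]_p) : psdmx A -> forall i j, `|A i j| <= \tr A.
Proof.
move=> [Asym Apsd] i j.
have Aji : A j i = A i j by rewrite -{1}Asym mxE.
have diag_le k : A k k <= \tr A.
  rewrite /mxtrace (bigD1 k) //= lerDl.
  by apply: sumr_ge0 => l _; rewrite -qform_delta.
have plus := Apsd (delta_mx i 0 + 1 *: delta_mx j 0).
have minus := Apsd (delta_mx i 0 + (-1) *: delta_mx j 0).
rewrite !qform_delta_add Aji in plus minus.
have := diag_le i; have := diag_le j.
by rewrite ler_norml; move=> *; apply/andP; split; lra.
Qed.

Lemma det_le_entry_bound p (A : 'M[R]_p) (t : R) :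
  (forall i j, `|A i j| <= t) -> `|\det A| <= (p`!)%:R * t ^+ p.
Proof.
move=> Ale; apply: le_trans (ler_norm_sum _ _ _) _.
rewrite mulr_natl -card_Sn -sumr_const; apply: ler_sum => s _.
rewrite normrM normr_sign mul1r normr_prod.
have -> : t ^+ p = \prod_(i < p) t by rewrite prodr_const card_ord.
by apply: ler_prod => i _; rewrite normr_ge0 Ale.
Qed.

Lemma psdmx_congr p q (C : 'M[R]_(p, q)) (B : 'M[R]_p) :
  psdmx B -> psdmx (C^T *m B *m C).
Proof.
move=> [Bsym Bpsd]; split; first by rewrite !trmx_mul trmxK Bsym mulmxA.
by move=> x; have := Bpsd (C *m x); rewrite /qform trmx_mul !mulmxA.
Qed.

Lemma trace_congr_le p q (G : 'M[R]_(p, q)) :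
  exists2 K, 0 <= K & forall B, psdmx B -> \tr (G^T *m B *m G) <= K * \tr B.
Proof.
exists (\sum_k \sum_j \sum_i `|G i k| * `|G j k|).
  by do 3!(apply: sumr_ge0 => ? _); rewrite mulr_ge0.
move=> B [Bsym Bpsd]; rewrite /mxtrace mulr_suml; apply: ler_sum => k _.
rewrite mxE mulr_suml; apply: ler_sum => j _.
rewrite mxE mulr_suml mulr_suml; apply: ler_sum => i _.
rewrite !mxE; apply: le_trans (ler_norm _) _; rewrite !normrM mulrAC.
by apply: ler_wpM2l; [rewrite mulr_ge0 | exact: psdmx_entry_le_trace].
Qed.

End PsdMatrix.

Section PosDefMatrix.
Variable R : rcfType.

Definition pdmx p (S : 'M[R]_p) := S^T = S /\ forall x, x != 0 -> 0 < qform S x.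

Lemma pdmx_psdmx p (S : 'M[R]_p) : pdmx S -> psdmx S.
Proof.
move=> [Ssym Spd]; split=> // x.
by have [->|/Spd/ltW//] := eqVneq x 0; rewrite /qform mulmx0 mxE.
Qed.

Lemma pdmx_schur p (S : 'M[R]_(1 + p)) : pdmx S ->
  0 < ulsubmx S 0 0 /\
  pdmx (drsubmx S - (ulsubmx S 0 0)^-1 *: (dlsubmx S *m (dlsubmx S)^T)).
Proof.
move=> [Ssym Spd].
set a := ulsubmx S; set b := dlsubmx S; set d := drsubmx S; set s := a 0 0.
have eS : S = block_mx a (ursubmx S) b d by rewrite submxK.
have [_ btr _ dsym] : [/\ a^T = a, b^T = ursubmx S, (ursubmx S)^T = b & d^T = d].
  by apply: eq_block_mx; rewrite -tr_block_mx -eS Ssym.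
have ea : a = s%:M by rewrite [LHS]mx11_scalar.
have s_gt0 : 0 < s.
  have := Spd (col_mx 1 0); rewrite col_mx_eq0 oner_eq0 => /(_ isT).
  rewrite /qform eS tr_col_mx trmx1 trmx0 mul_row_block !mul1mx !mul0mx !addr0.
  by rewrite mul_row_col mulmx1 mulmx0 addr0.
split=> //; split.
  by rewrite linearB /= linearZ /= trmx_mul trmxK dsym.
(* the quadratic form of the Schur complement at [y] is that of [S] at [(u, y)] *)
move=> y y0; set u : 'cV_1 := - s^-1 *: (b^T *m y).
have := Spd (col_mx u y); rewrite col_mx_eq0 negb_and y0 orbT => /(_ isT).
have eu : u^T = - s^-1 *: (y^T *m b) by rewrite /u linearZ /= trmx_mul trmxK.
rewrite /qform eS tr_col_mx mul_row_block mul_row_col -btr ea mul_mx_scalar eu.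
rewrite scalerA mulrN mulfV ?gt_eqF // scaleN1r addNr mul0mx add0r.
rewrite mulmxBr mulmxBl mulmxDl addrC -!scalemxAl -scalemxAr -scalemxAl scaleNr.
by rewrite !mulmxA.
Qed.

Lemma pdmx_cholesky p (S : 'M[R]_p) : pdmx S ->
  exists2 C : 'M[R]_p, C \in unitmx & S = C *m C^T.
Proof.
elim: p S => [|p IH] S Spd.
  by exists 1%:M; [exact: unitmx1 | apply/matrixP => [[]]].
move: S Spd; change p.+1 with (1 + p)%N => S Spd.
have [s_gt0 /IH [C' C'unit eC']] := pdmx_schur Spd.
have [Ssym _] := Spd.
set a := ulsubmx S; set b := dlsubmx S; set s := a 0 0 in s_gt0 eC'.
have eS : S = block_mx a (ursubmx S) b (drsubmx S) by rewrite submxK.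
have [_ btr _ _] : [/\ a^T = a, b^T = ursubmx S, (ursubmx S)^T = b &
                      (drsubmx S)^T = drsubmx S].
  by apply: eq_block_mx; rewrite -tr_block_mx -eS Ssym.
set q := Num.sqrt s.
have q_neq0 : q != 0 by rewrite gt_eqF ?sqrtr_gt0.
have qq : q * q = s by rewrite -expr2 sqr_sqrtr // ltW.
exists (block_mx q%:M 0 (q^-1 *: b) C').
  rewrite unitmxE det_lblock det_scalar1 unitrM -!unitmxE C'unit andbT.
  by rewrite unitfE.
rewrite eS tr_block_mx mulmx_block !trmx0 !mulmx0 !addr0; congr block_mx.
- by rewrite tr_scalar_mx -scalar_mxM qq [LHS]mx11_scalar.
- by rewrite mul_scalar_mx linearZ /= mul0mx addr0 scalerA mulfV // scale1r btr.
- by rewrite tr_scalar_mx mul_mx_scalar scalerA mulfV // scale1r.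
- by rewrite -eC' linearZ /= -scalemxAl -scalemxAr scalerA -invfM qq addrC subrK.
Qed.

Lemma trace_mul_pdmx_ge p (S : 'M[R]_p) : pdmx S ->
  exists2 c, 0 < c & forall A, psdmx A -> c * \tr A <= \tr (A *m S).
Proof.
move=> /pdmx_cholesky [C Cunit ->].
have [K K_ge0 trK] := trace_congr_le (invmx C).
exists (K + 1)^-1; first by rewrite invr_gt0; lra.
move=> A Apsd; set B := C^T *m A *m C.
have trAS : \tr (A *m (C *m C^T)) = \tr B by rewrite /B mulmxA mxtrace_mulC mulmxA.
have eA : A = (invmx C)^T *m B *m invmx C.
  by rewrite /B -!mulmxA mulmxV // mulmx1 mulmxA -trmx_mul mulmxV // trmx1 mul1mx.
have Bpsd : psdmx B := psdmx_congr C Apsd.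
have trB_ge0 := psdmx_trace_ge0 Bpsd; have trA_ge0 := psdmx_trace_ge0 Apsd.
have := trK _ Bpsd; rewrite -eA trAS => trA_le.
by rewrite ler_pdivrMl; [nra | lra].
Qed.

End PosDefMatrix.

(* [x] orthogonal to [ker F] lies in the row space of [F^T]; since
   [F^T :&: kermx F = 0], [F^T *m F] has the rank of [F], so [F = D *m F^T *m F]
   and [y *m F^T = y *m F^T *m F *m D^T]. *)
Lemma kermx_orth_left_inverse (R : realFieldType) d e (F : 'M[R]_(d, e)) :
  exists G : 'M[R]_(e, d),
    forall x : 'rV[R]_d, x *m (kermx F)^T = 0 -> x = x *m F *m G.
Proof.
have kerF_sub : (F^T <= kermx (kermx F)^T)%MS.
  by apply/sub_kermxP; rewrite -trmx_mul mulmx_ker trmx0.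
have kerF_eq : (kermx (kermx F)^T <= F^T)%MS.
  rewrite -(mxrank_leqif_sup kerF_sub).2 mxrank_ker mxrank_tr mxrank_ker mxrank_tr.
  by rewrite subKn ?rank_leq_row.
have capF0 : (F^T :&: kermx F)%MS = 0.
  have /submxP [W eW] : ((F^T :&: kermx F)%MS <= F^T)%MS by exact: capmxSl.
  have /sub_kermxP Z0 : ((F^T :&: kermx F)%MS <= kermx F)%MS by exact: capmxSr.
  by apply: mulmx_trmx_eq0; rewrite {2}eW trmx_mul trmxK mulmxA Z0 mul0mx.
have rankFtF : \rank (F^T *m F) = \rank F.
  by have := mxrank_mul_ker F^T F; rewrite capF0 mxrank0 addn0 mxrank_tr.
have /submxP [D eD] : (F <= F^T *m F)%MS.
  by rewrite -(mxrank_leqif_sup (submxMl _ _)).2 rankFtF.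
exists D^T => x /sub_kermxP/submx_trans/(_ kerF_eq) /submxP [y ->].
by rewrite -!mulmxA; congr (_ *m _); rewrite {1}eD !trmx_mul trmxK mulmxA.
Qed.

Section RowNorm.
Variable R : rcfType.

Lemma rV_sqnormE a (v : 'rV[R]_a) : (v *m v^T) 0 0 = \sum_k v 0 k ^+ 2.
Proof. by rewrite mxE; apply: eq_bigr => k _; rewrite mxE expr2. Qed.

Lemma mulmx_sqnorm_le a b (G : 'M[R]_(a, b)) : exists2 K, 0 <= K &
  forall w : 'rV[R]_a, ((w *m G) *m (w *m G)^T) 0 0 <= K * (w *m w^T) 0 0.
Proof.
pose c k := \sum_j `|G j k|.
exists (\sum_k c k ^+ 2); first by apply: sumr_ge0 => k _; rewrite sqr_ge0.
move=> w; rewrite !rV_sqnormE mulr_suml.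
set M := Num.sqrt (\sum_k w 0 k ^+ 2).
have sum_ge0 : 0 <= \sum_k w 0 k ^+ 2 by apply: sumr_ge0 => k _; rewrite sqr_ge0.
have w_le j : `|w 0 j| <= M.
  rewrite -sqrtr_sqr ler_wsqrtr //.
  by rewrite (bigD1 j) //= lerDl; apply: sumr_ge0 => k _; rewrite sqr_ge0.
apply: ler_sum => k _.
have wG_le : `|(w *m G) 0 k| <= M * c k.
  rewrite mxE /c mulr_sumr; apply: le_trans (ler_norm_sum _ _ _) _.
  by apply: ler_sum => j _; rewrite normrM ler_wpM2r.
rewrite mulrC -(sqr_sqrtr sum_ge0) -exprMn -real_normK ?num_real //.
by rewrite lerXn2r ?nnegrE ?mulr_ge0 ?sqrtr_ge0 ?sumr_ge0.
Qed.

Lemma kermx_orth_sqnorm_le d e (F : 'M[R]_(d, e)) : exists2 K, 0 <= K &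
  forall x : 'rV[R]_d, x *m (kermx F)^T = 0 ->
    (x *m x^T) 0 0 <= K * ((x *m F) *m (x *m F)^T) 0 0.
Proof.
have [G xFG] := kermx_orth_left_inverse F.
have [K K_ge0 GK] := mulmx_sqnorm_le G.
by exists K => // x /xFG {1 2}->; exact: GK.
Qed.

End RowNorm.

Lemma cvgy_le_scale {T} {F : set_system T} {FF : Filter F} (R : realFieldType)
    (f g : T -> R) (K : R) :
  0 < K -> (\forall x \near F, f x <= K * g x) -> f @ F --> +oo -> g @ F --> +oo.
Proof.
move=> K_gt0 fg /cvgryPge fy; apply/cvgryPge => A.
apply: filterS2 fg (fy (K * A)) => x fg KA.
by rewrite -(ler_pM2l K_gt0); exact: le_trans fg.
Qed.

(* [ln t < eps * t - ln eps] for every [eps > 0], with [eps] chosen so that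
   [a * eps <= c / 2]. *)
Lemma cvgy_sub_ln (R : realType) {T} {F : set_system T} {FF : Filter F}
    (u : T -> R) (c a b : R) :
  0 < c -> 0 <= a -> u @ F --> +oo ->
  (fun x => c * u x - a * ln (u x) - b) @ F --> +oo.
Proof.
move=> c_gt0 a_ge0 /cvgryPge uy.
set eps := c / (2 * (a + 1)).
have eps_gt0 : 0 < eps by rewrite divr_gt0 // mulr_gt0 //; lra.
have a_eps : a * eps <= c / 2.
  rewrite /eps mulrA ler_pdivrMr ?mulr_gt0 //; last lra.
  by rewrite mulrAC ler_pdivlMr //; nra.
apply/cvgryPge => A.
near=> x.
have ux_gt0 : 0 < u x by apply: lt_le_trans (_ : 1 <= u x); [lra | near: x; exact: uy].
have ln_le : ln (u x) <= eps * u x - ln eps.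
  have := ln_sublinear (mulr_gt0 eps_gt0 ux_gt0).
  by rewrite lnM ?posrE //; lra.
have ux_ge : 2 * (A + b - a * ln eps) / c <= u x by near: x; exact: uy.
rewrite ler_pdivrMr // in ux_ge.
have : a * ln (u x) <= a * (eps * u x) - a * ln eps.
  by rewrite -mulrBr ler_wpM2l.
have : a * (eps * u x) <= c / 2 * u x by rewrite mulrA ler_wpM2r // ltW.
lra.
Unshelve. all: end_near.
Qed.

Section RealMatrix.
Variable R : realType.

Lemma psdmx_ln_det_le p (A : 'M[R]_p) : psdmx A -> 1 <= \tr A ->
  ln (\det A) <= ln (p`!)%:R + p%:R * ln (\tr A).
Proof.
move=> Apsd tr_ge1; set t := \tr A.
have fact_ge1 : 1 <= (p`!)%:R :> R by rewrite ler1n fact_gt0.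
have rhs_ge0 : 0 <= ln (p`!)%:R + p%:R * ln t by rewrite addr_ge0 ?mulr_ge0 ?ln_ge0.
have [det_le1|det_gt1] := lerP (\det A) 1; first exact: le_trans (ln_le0 det_le1) _.
have bound_gt0 : 0 < (p`!)%:R * t ^+ p by rewrite mulr_gt0 ?exprn_gt0; lra.
rewrite mulr_natl -lnXn; last lra.
rewrite -lnM ?posrE ?exprn_gt0 //; try lra.
rewrite ler_ln ?posrE //; last lra.
apply: le_trans (real_ler_norm (num_real _)) (det_le_entry_bound _).
exact: psdmx_entry_le_trace.
Qed.

Lemma psdmx_frob_le p (A : 'M[R]_p) : psdmx A -> frob R _ A <= p%:R * \tr A.
Proof.
move=> Apsd; have tr_ge0 := psdmx_trace_ge0 Apsd.
rewrite /frob -(ger0_norm (_ : 0 <= p%:R * \tr A)) ?mulr_ge0 //.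
rewrite -sqrtr_sqr ler_wsqrtr // mxtrace_mul_trmx.
rewrite (_ : _ ^+ 2 = \sum_(i < p) \sum_(j < p) \tr A ^+ 2); last first.
  by rewrite !sumr_const card_ord -mulrnA exprMn -natrX mulr_natl mulnn.
apply: ler_sum => i _; apply: ler_sum => j _.
rewrite -expr2 -real_normK ?num_real // lerXn2r ?nnegrE //.
exact: psdmx_entry_le_trace.
Qed.

End RealMatrix.

Section DualFunctional.
Variable R : realType.
Variables m N n : nat.
Local Notation p1 := (m * n.+1)%N.
Local Notation p2 := (m * N)%N.
Local Notation A := (Aop R m N n).

Lemma Aop_linear c L1 T1 L2 T2 : A (c *: L1 + L2) (c *: T1 + T2) = c *: A L1 T1 + A L2 T2.
Proof.
rewrite /Aop !mulmxDr !mulmxDl -!scalemxAr -!scalemxAl !scalerDr !scalerN.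
by rewrite (addrACA _ _ (c *: _)) opprD (addrACA (_ + _)).
Qed.

(* Pairs [(L, T)] are vectorised as [vecp L T]; [Phi] maps such a vector to
   [(A(L, T), L - L^T, T - T^T)], so that its kernel consists exactly of the
   symmetric pairs in [ker A]. *)
Definition vecp (L : 'M[R]_p1) (T : 'M[R]_p2) : 'rV[R]_(p1 * p1 + p2 * p2) :=
  row_mx (mxvec L) (mxvec T).

Definition Phi (v : 'rV[R]_(p1 * p1 + p2 * p2)) :
    'rV[R]_(p2 * p2 + (p1 * p1 + p2 * p2)) :=
  let L := vec_mx (lsubmx v) in let T := vec_mx (rsubmx v) in
  row_mx (mxvec (A L T)) (row_mx (mxvec (L - L^T)) (mxvec (T - T^T))).

Lemma Phi_linear : linear Phi.
Proof.
move=> c u v; rewrite /Phi !linearP /= Aop_linear !scale_row_mx !add_row_mx.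
congr row_mx; first exact: linearP.
by congr row_mx; rewrite -[RHS]linearP; congr mxvec; rewrite scalerBr scalerN addrACA.
Qed.

HB.instance Definition _ := GRing.isLinear.Build R _ _ _ Phi Phi_linear.

Lemma Phi_vecp L T : L^T = L -> T^T = T -> Phi (vecp L T) = row_mx (mxvec (A L T)) 0.
Proof.
move=> Lsym Tsym; rewrite /Phi /vecp row_mxKl row_mxKr !mxvecK Lsym Tsym !subrr.
by rewrite !linear0 row_mx0.
Qed.

Lemma Phi_eq0 v : Phi v = 0 ->
  exists L T, [/\ L^T = L, T^T = T, A L T = 0 & v = vecp L T].
Proof.
rewrite /Phi => /eqP; rewrite !row_mx_eq0 !mxvec_eq0.
move=> /and3P [/eqP A0 /eqP/subr0_eq/esym Lsym /eqP/subr0_eq/esym Tsym].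
exists (vec_mx (lsubmx v)), (vec_mx (rsubmx v)).
by split=> //; rewrite /vecp !vec_mxK hsubmxK.
Qed.

Lemma mxvec_dot a b (M M' : 'M[R]_(a, b)) :
  (mxvec M *m (mxvec M')^T) 0 0 = \tr (M *m M'^T).
Proof.
rewrite mxtrace_mul_trmx mxE (reindex _ (curry_mxvec_bij _ _)) /= pair_bigA.
by apply: eq_bigr => [[i j]] _ /=; rewrite mxE !mxvecE.
Qed.

Lemma vecp_dot L T L' T' :
  (vecp L T *m (vecp L' T')^T) 0 0 = \tr (L *m L'^T) + \tr (T *m T'^T).
Proof. by rewrite /vecp tr_row_mx mul_row_col mxE !mxvec_dot. Qed.

Lemma kerA_perp_pnorm_le : exists2 K, 0 < K &
  forall L T, in_kerA_perp R m N n L T -> pnorm R _ _ L T <= K * frob R _ (A L T).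
Proof.
have [K K_ge0 FK] := kermx_orth_sqnorm_le (lin1_mx Phi).
exists (Num.sqrt (K + 1)); first by rewrite sqrtr_gt0; lra.
move=> L T [Lsym [Tsym Lperp]].
have vecp_orth : vecp L T *m (kermx (lin1_mx Phi))^T = 0.
  apply/rowP => i; rewrite [RHS]mxE.
  have -> : (vecp L T *m (kermx (lin1_mx Phi))^T) 0 i =
            (vecp L T *m (row i (kermx (lin1_mx Phi)))^T) 0 0.
    by rewrite !mxE; apply: eq_bigr => j _; rewrite !mxE.
  have /Phi_eq0 [L' [T' [L'sym T'sym A0 ->]]] : Phi (row i (kermx (lin1_mx Phi))) = 0.
    by rewrite -mul_rV_lin1 -row_mul mulmx_ker row0.
  by rewrite vecp_dot L'sym T'sym; exact: Lperp.
have := FK _ vecp_orth; rewrite mul_rV_lin1 /= Phi_vecp // vecp_dot.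
rewrite tr_row_mx mul_row_col trmx0 mulmx0 addr0 mxvec_dot => le_K.
have AAt_ge0 : 0 <= \tr (A L T *m (A L T)^T).
  by rewrite -mxvec_dot rV_sqnormE sumr_ge0 // => k _; rewrite sqr_ge0.
rewrite /pnorm /frob -sqrtrM; last lra.
by rewrite ler_wsqrtr //; nra.
Qed.

Section Functional.
Variable Sig : nat -> 'M[R]_m.
Variable S : 'M[R]_p2.
Hypothesis ESE : (Emx R m N n)^T *m S *m Emx R m N n = Toep R m n Sig.
Hypothesis USU : (Umx R m N)^T *m S *m Umx R m N = S.

Lemma trace_Toep_Aop L T : \tr (L *m Toep R m n Sig) = \tr (A L T *m S).
Proof.
rewrite -ESE /Aop; set E := Emx R m N n; set U := Umx R m N.
have trE : \tr (E *m L *m E^T *m S) = \tr (L *m (E^T *m S *m E)).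
  by rewrite -!mulmxA mxtrace_mulC !mulmxA.
have trU : \tr (U *m T *m U^T *m S) = \tr (T *m S).
  by rewrite -!mulmxA mxtrace_mulC -!mulmxA (mulmxA _ S) USU.
by rewrite !mulmxDl mulNmx !mxtraceD trE trU raddfN addrK.
Qed.

Lemma Jfun_ge L T : psdmx (A L T) -> 1 <= \tr (A L T) ->
  \tr (A L T *m S) - ln (p2`!)%:R - p2%:R * ln (\tr (A L T)) <= Jfun R m N n Sig L T.
Proof.
move=> Apsd tr_ge1; rewrite /Jfun (trace_Toep_Aop L T).
by have := psdmx_ln_det_le Apsd tr_ge1; lra.
Qed.

End Functional.

End DualFunctional.

Theorem lemma4 (R : realType) (m n N : nat) (hm : (1 <= m)%N) (hn : (1 <= n)%N)
  (hN : (2 * n < N)%N) (Sig : nat -> 'M[R]_m)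
  (hSig : exists SigN : 'M[R]_(m * N),
     posdef R _ SigN /\
     (Emx R m N n)^T *m SigN *m Emx R m N n = Toep R m n Sig /\
     (Umx R m N)^T *m SigN *m Umx R m N = SigN)
  (Lk : nat -> 'M[R]_(m * n.+1)) (Tk : nat -> 'M[R]_(m * N))
  (hL : forall k, Lplus R m N n (Lk k) (Tk k))
  (hdiv : (fun k => pnorm R _ _ (Lk k) (Tk k)) @ \oo --> +oo) :
  (fun k => frob R _ (Aop R m N n (Lk k) (Tk k))) @ \oo --> +oo /\
  (fun k => Jfun R m N n Sig (Lk k) (Tk k)) @ \oo --> +oo.
Proof.
pose Ak k := Aop R m N n (Lk k) (Tk k).
have [K K_gt0 pnorm_le] := kerA_perp_pnorm_le R m N n.
have frob_y : (fun k => frob R _ (Ak k)) @ \oo --> +oo.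
  by apply: cvgy_le_scale K_gt0 _ hdiv; apply: nearW => k; exact/pnorm_le/(hL k).1.
split=> //.
have [S [Spd [ESE USU]]] := hSig.
have [c c_gt0 trS_ge] := trace_mul_pdmx_ge (Spd : pdmx S).
have Apsd k : psdmx (Ak k) := pdmx_psdmx ((hL k).2 : pdmx (Ak k)).
have mN_gt0 : 0 < (m * N)%:R :> R.
  by rewrite ltr0n muln_gt0 hm (leq_ltn_trans (leq0n _) hN).
have tr_y : (fun k => \tr (Ak k)) @ \oo --> +oo.
  apply: cvgy_le_scale mN_gt0 _ frob_y.
  by apply: nearW => k; exact: psdmx_frob_le.
apply: ger_cvgy (cvgy_sub_ln (ln ((m * N)`!)%:R) c_gt0 (ler0n _ (m * N)) tr_y).
near=> k.
have tr_ge1 : 1 <= \tr (Ak k) by near: k; exact: (cvgryPge _).1 tr_y 1.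
by have := Jfun_ge ESE USU (Apsd k) tr_ge1; have := trS_ge _ (Apsd k); lra.
Unshelve. all: end_near.
Qed.
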